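(* Let $H\in\mathbb{R}^{N\times n}$ have full column rank, let $\epsilon>0$, and let $\mathcal{T}\subset\{1,\dots,N\}$ be a nonempty index set such that $H_{\mathcal{T}^c}$ has full column rank and $|\mathcal{T}|>\underline{\sigma}_{\mathcal{T}^c}^2/\overline{\sigma}_{\mathcal{T}}^2$, where $\overline{\sigma}_{\mathcal{T}}$ is the largest singular value of $H_{\mathcal{T}}$ and $\underline{\sigma}_{\mathcal{T}^c}$ is the smallest nonzero singular value of $H_{\mathcal{T}^c}$. Define $$\sigma_1=\max_{\mathbf{v}\in\mathbb{R}^n\setminus\{\mathbf{0}\}}\frac{\|H_{\mathcal{T}}\mathbf{v}\|_1}{\|H_{\mathcal{T}^c}\mathbf{v}\|_1},$$ and suppose the set $\{\mathbf{w}\in\mathrm{range}(H):\|\mathbf{w}_{\mathcal{T}}\|_1>\|\mathbf{w}_{\mathcal{T}^c}\|_1\}$ is nonempty. Let $\mathbf{x}_e$ be an optimal solution of $$\max_{\mathbf{x}\in\mathbb{R}^n}\ \|H_{\mathcal{T}}\mathbf{x}\|_1\quad\text{subject to}\quad\|H_{\mathcal{T}^c}\mathbf{x}\|_1\le\epsilon,$$ and define the attack vector $\mathbf{e}\in\mathbb{R}^N$ by $\mathbf{e}_{\mathcal{T}}=H_{\mathcal{T}}\mathbf{x}_e$, $\mathbf{e}_{\mathcal{T}^c}=\mathbf{0}$. Let $\mathbf{x}^\star\in\mathbb{R}^n$, $\mathbf{y}^\star=H\mathbf{x}^\star$ and $\mathbf{y}=\mathbf{y}^\star+\mathbf{e}$,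 and let $\mathcal{D}(\mathbf{y})$ be any minimizer of $\mathbf{z}\mapsto\|\mathbf{y}-H\mathbf{z}\|_1$ over $\mathbb{R}^n$ (note $\mathcal{D}(\mathbf{y}^\star)=\mathbf{x}^\star$). Then $$\|\mathbf{x}^\star-\mathcal{D}(\mathbf{y})\|_2\ge\frac{\sigma_1-1}{\sqrt{|\mathcal{T}|}\,\overline{\sigma}_{\mathcal{T}}-\underline{\sigma}_{\mathcal{T}^c}}\,\epsilon>0\qquad\text{and}\qquad\|\mathbf{y}-H\mathcal{D}(\mathbf{y})\|_2\le\epsilon.$$ Consequently the attack $\mathbf{e}$ is $(\epsilon,\alpha)$-successful for every $\alpha\le\frac{\sigma_1-1}{\sqrt{|\mathcal{T}|}\overline{\sigma}_{\mathcal{T}}-\underline{\sigma}_{\mathcal{T}^c}}\epsilon$.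
   Context: For $\mathcal{T}\subseteq\{1,\dots,N\}$, $H_{\mathcal{T}}$ denotes the submatrix of $H$ formed by the rows indexed by $\mathcal{T}$, $\mathbf{w}_{\mathcal{T}}$ the subvector of $\mathbf{w}$ indexed by $\mathcal{T}$, and $\mathcal{T}^c$ the complement in $\{1,\dots,N\}$. The ($\ell_1$) decoder is $\mathcal{D}(\mathbf{y})\in\arg\min_{\mathbf{z}\in\mathbb{R}^n}\|\mathbf{y}-H\mathbf{z}\|_1$. An attack $\mathbf{e}$ is called $(\epsilon,\alpha)$-successful if, with $\mathbf{y}=\mathbf{y}^\star+\mathbf{e}$ ($\mathbf{y}^\star$ the true, unattacked measurement and $\mathbf{x}^\star=\mathcal{D}(\mathbf{y}^\star)$), one has $\|\mathbf{x}^\star-\mathcal{D}(\mathbf{y})\|_2\ge\alpha$ and $\|\mathbf{y}-H\mathcal{D}(\mathbf{y})\|_2\le\epsilon$. *)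

From HB Require Import structures.
From mathcomp Require Import all_boot all_order all_algebra.
From mathcomp Require Import all_classical reals.
Set Implicit Arguments. Unset Strict Implicit. Unset Printing Implicit Defensive.
Import Order.TTheory GRing.Theory Num.Theory.
Local Open Scope ring_scope.
Local Open Scope classical_set_scope.

Section Defs.
Variable R : realType.

Definition subrows (N m : nat) (T : {set 'I_N}) (A : 'M[R]_(N, m)) : 'M[R]_(#|T|, m) :=
  \matrix_(i < #|T|, j < m) A (enum_val i) j.

Definition norm1 (k : nat) (v : 'cV[R]_k) : R := \sum_(i < k) `|v i 0|.
Definition norm2 (k : nat) (v : 'cV[R]_k) : R := Num.sqrt (\sum_(i < k) (v i 0) ^+ 2).

Definition sigma_max (p m : nat) (A : 'M[R]_(p, m)) : R :=
  Num.sqrt (sup [set a : R | eigenvalue (A^T *m A) a]).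

Definition sigma_min_nz (p m : nat) (A : 'M[R]_(p, m)) : R :=
  Num.sqrt (inf [set a : R | eigenvalue (A^T *m A) a /\ 0 < a]).

Definition sigma1 (N n : nat) (H : 'M[R]_(N, n)) (T : {set 'I_N}) : R :=
  sup [set r : R | exists2 v : 'cV[R]_n, v != 0 &
        r = norm1 (subrows T H *m v) / norm1 (subrows (~: T) H *m v)].

Definition l1_decoder (N n : nat) (H : 'M[R]_(N, n)) (y : 'cV[R]_N) (xd : 'cV[R]_n) :=
  forall z : 'cV[R]_n, norm1 (y - H *m xd) <= norm1 (y - H *m z).

Definition attack_successful (N n : nat) (H : 'M[R]_(N, n)) (xstar : 'cV[R]_n)
    (e : 'cV[R]_N) (eps alpha : R) :=
  forall xd : 'cV[R]_n, l1_decoder H (H *m xstar + e) xd ->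
    alpha <= norm2 (xstar - xd) /\ norm2 (H *m xstar + e - H *m xd) <= eps.

End Defs.

(* The candidate [xstar + xe] has residual [||H_{T^c} xe||_1 <= eps], so
   every l1-decoding [xd] has residual at most [eps], in l1 and hence in l2.
   Writing [u = xd - xstar], that residual splits as
   [||H_T (xe - u)||_1 + ||H_{T^c} u||_1], while optimality of [xe] gives
   [||H_T xe||_1 >= sigma_1 eps].  The triangle inequality on the rows in [T]
   then yields [(sigma_1 - 1) eps <= ||H_T u||_1 - ||H_{T^c} u||_1], and the
   right-hand side is at most
   [(sqrt |T| sigma_max(H_T) - sigma_min(H_{T^c})) ||u||_2] by comparing l1 and
   l2 norms and bounding the Rayleigh quotients of the Gram matrices through
   the spectral theorem, applied to their complexifications, which are
   hermitian. *)
From mathcomp Require Import all_boot all_order all_algebra.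
From mathcomp Require Import all_classical reals.
From mathcomp Require Import complex lra.
Import Order.TTheory GRing.Theory Num.Theory.
Local Open Scope ring_scope.
Set Implicit Arguments. Unset Strict Implicit. Unset Printing Implicit Defensive.

Lemma conj_map_real_complex (R : rcfType) m p (A : 'M[R]_(m, p)) :
  map_mx Num.conj (map_mx (real_complex R) A) = map_mx (real_complex R) A.
Proof. by apply/matrixP => i j; rewrite !mxE /=; apply/conj_Creal; rewrite complex_real. Qed.

Section RealSymmetricSpectral.
Variables (R : realType) (n : nat) (M : 'M[R]_n).
Hypothesis symM : M^T = M.

Local Notation toC := (real_complex R).
Local Notation Mc := (map_mx toC M).
Local Notation P := (spectralmx Mc).
Local Notation D := (spectral_diag Mc).

Lemma complexified_hermitian : Mc \is hermsymmx.
Proof.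
by apply/is_hermitianmxP; rewrite expr0 scale1r !map_trmx symM conj_map_real_complex.
Qed.

Lemma complexified_spectral : Mc = invmx P *m diag_mx D *m P.
Proof. exact/orthomx_spectralP/hermitian_normalmx/complexified_hermitian. Qed.

Definition spectral_value (i : 'I_n) : R := complex.Re (D 0 i).

Lemma spectral_valueE i : D 0 i = toC (spectral_value i).
Proof.
rewrite /spectral_value RRe_real //.
by move/mxOverP: (hermitian_spectral_diag_real complexified_hermitian); apply.
Qed.

Lemma eigenvalue_spectral_value i : eigenvalue M (spectral_value i).
Proof.
rewrite -(eigenvalue_map toC) /= -spectral_valueE; apply/eigenvalueP.
exists (row i P).
  rewrite -row_mul [X in P *m X]complexified_spectral !mulmxA mulmxV ?spectral_unit // mul1mx.
  apply/rowP => k; rewrite !mxE (bigD1 i) //= big1 ?addr0 => [|j ji].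
    by rewrite !mxE eqxx mulr1n.
  by rewrite !mxE eq_sym (negPf ji) mulr0n mul0r.
apply/eqP => /(congr1 (mulmx^~ (invmx P))); rewrite rowE mulmxK ?spectral_unit // mul0mx.
by move/matrixP/(_ 0 i); rewrite !mxE !eqxx /= => /eqP; rewrite oner_eq0.
Qed.

Lemma eigenvalue_spectral_valueP a : eigenvalue M a -> exists i, a = spectral_value i.
Proof.
rewrite -(eigenvalue_map toC) => /eigenvalueP [v vM v0].
set w := v *m invmx P.
have w0 : w != 0.
  apply: contra v0 => /eqP w0; apply/eqP.
  by rewrite -[v](mulmxKV (spectral_unit Mc)) -/w w0 mul0mx.
have wD : w *m diag_mx D = toC a *: w.
  rewrite /w scalemxAl -vM [X in _ = v *m X *m _]complexified_spectral.
  by rewrite !mulmxA mulmxK ?spectral_unit.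
have /existsP [j wj] : [exists j, w 0 j != 0].
  apply: contraR w0 => /existsPn wj; apply/eqP/rowP => k.
  by move: (wj k); rewrite negbK => /eqP ->; rewrite mxE.
exists j; apply: (fmorph_inj toC) => /=; rewrite -spectral_valueE.
move/matrixP/(_ 0 j): wD; rewrite mul_mx_diag mxE [X in _ = X]mxE => /eqP.
by rewrite mulrC -subr_eq0 -mulrBl mulf_eq0 (negPf wj) orbF subr_eq0 => /eqP.
Qed.

(* The weights [c i] are the squared moduli of the coordinates of [u] in the
   unitary eigenbasis [P]. *)
Lemma quadratic_form_spectral (u : 'cV[R]_n) :
  exists c : 'I_n -> R, [/\ forall i, 0 <= c i,
    \sum_i c i = \sum_i u i 0 ^+ 2 &
    (u^T *m M *m u) 0 0 = \sum_i spectral_value i * c i].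
Proof.
set uc := map_mx toC u; set q := P *m uc; set qs := uc^T *m invmx P.
have ucT : map_mx Num.conj uc^T = uc^T by rewrite map_trmx conj_map_real_complex.
have qsE j : qs 0 j = (q j 0)^*.
  by rewrite /qs invmx_unitary ?spectral_unitarymx // -ucT -map_mxM -trmx_mul !mxE.
pose c i := complex.Re (q i 0) ^+ 2 + complex.Im (q i 0) ^+ 2.
have cE i : toC (c i) = (q i 0)^* * q i 0 by rewrite /c add_Re2_Im2 normCK mulrC.
exists c; split.
- by move=> i; rewrite addr_ge0 ?sqr_ge0.
- apply: (fmorph_inj toC); rewrite !rmorph_sum /=.
  have -> : \sum_i toC (u i 0 ^+ 2) = (uc^T *m uc) 0 0.
    by rewrite mxE; apply: eq_bigr => i _; rewrite !mxE rmorphXn /= expr2.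
  rewrite -{2}(mulKmx (spectral_unit Mc) uc) [uc^T *m _]mulmxA -/q -/qs mxE.
  by apply: eq_bigr => i _; rewrite cE qsE.
apply: (fmorph_inj toC); rewrite rmorph_sum /=.
have -> : toC ((u^T *m M *m u) 0 0) = (uc^T *m Mc *m uc) 0 0.
  by rewrite /uc map_trmx -!map_mxM [RHS]mxE.
rewrite complexified_spectral !mulmxA -/qs -!mulmxA -/q mulmxA mxE.
apply: eq_bigr => j _.
by rewrite mul_diag_mx mxE qsE rmorphM /= cE spectral_valueE mulrCA.
Qed.

End RealSymmetricSpectral.

Section Norms.
Variable R : realType.

Lemma subrowsM N m p (T : {set 'I_N}) (A : 'M[R]_(N, m)) (B : 'M[R]_(m, p)) :
  subrows T (A *m B) = subrows T A *m B.
Proof. by apply/matrixP => i j; rewrite !mxE; apply: eq_bigr => k _; rewrite mxE. Qed.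

Lemma subrowsB N m (T : {set 'I_N}) (A B : 'M[R]_(N, m)) :
  subrows T (A - B) = subrows T A - subrows T B.
Proof. by apply/matrixP => i j; rewrite !mxE. Qed.

Lemma norm1_ge0 k (v : 'cV[R]_k) : 0 <= norm1 v.
Proof. exact: sumr_ge0. Qed.

Lemma norm1D k (v w : 'cV[R]_k) : norm1 (v + w) <= norm1 v + norm1 w.
Proof. by rewrite /norm1 -big_split; apply: ler_sum => i _; rewrite mxE ler_normD. Qed.

Lemma norm1N k (v : 'cV[R]_k) : norm1 (- v) = norm1 v.
Proof. by rewrite /norm1; apply: eq_bigr => i _; rewrite mxE normrN. Qed.

Lemma norm1Z k (a : R) (v : 'cV[R]_k) : norm1 (a *: v) = `|a| * norm1 v.
Proof. by rewrite /norm1 mulr_sumr; apply: eq_bigr => i _; rewrite mxE normrM. Qed.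

Lemma norm1_0 k : norm1 (0 : 'cV[R]_k) = 0.
Proof. by rewrite /norm1 big1 // => i _; rewrite mxE normr0. Qed.

Lemma norm1_eq0 k (v : 'cV[R]_k) : (norm1 v == 0) = (v == 0).
Proof.
apply/idP/eqP => [|->]; last by rewrite norm1_0.
rewrite psumr_eq0 // => /allP v0; apply/matrixP => i j; rewrite ord1 mxE.
by apply/eqP; rewrite -normr_eq0; apply: v0 (mem_index_enum _).
Qed.

Lemma norm1_split N (T : {set 'I_N}) (v : 'cV[R]_N) :
  norm1 v = norm1 (subrows T v) + norm1 (subrows (~: T) v).
Proof.
rewrite /norm1 (bigID (mem T)) /=; congr (_ + _).
  by rewrite big_enum_val; apply: eq_bigr => i _; rewrite mxE.
rewrite (eq_bigl (fun i => i \in ~: T)); last by move=> i; rewrite !inE.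
by rewrite big_enum_val; apply: eq_bigr => i _; rewrite mxE.
Qed.

Lemma norm2_ge0 k (v : 'cV[R]_k) : 0 <= norm2 v.
Proof. exact: sqrtr_ge0. Qed.

Lemma norm2N k (v : 'cV[R]_k) : norm2 (- v) = norm2 v.
Proof. by rewrite /norm2; congr Num.sqrt; apply: eq_bigr => i _; rewrite mxE sqrrN. Qed.

Lemma sqr_norm2 k (v : 'cV[R]_k) : norm2 v ^+ 2 = \sum_i v i 0 ^+ 2.
Proof. by rewrite sqr_sqrtr // sumr_ge0 // => i _; rewrite sqr_ge0. Qed.

Lemma norm2_gt0 k (v : 'cV[R]_k) : v != 0 -> 0 < norm2 v.
Proof.
move=> v0; rewrite lt_neqAle norm2_ge0 andbT; apply: contra v0 => /eqP/esym nv0.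
move/eqP: (sqr_norm2 v); rewrite nv0 expr0n eq_sym psumr_eq0 => [/allP sq0|i _].
  apply/eqP/matrixP => i j; rewrite ord1 mxE; apply/eqP.
  by rewrite -sqrf_eq0; apply: sq0 (mem_index_enum _).
by rewrite sqr_ge0.
Qed.

Lemma sqr_norm2_le_sqr_norm1 k (v : 'cV[R]_k) : norm2 v ^+ 2 <= norm1 v ^+ 2.
Proof.
rewrite sqr_norm2 /norm1.
suff [] : 0 <= \sum_i `|v i 0| /\ \sum_i v i 0 ^+ 2 <= (\sum_i `|v i 0|) ^+ 2 by [].
apply: (big_rec2 (fun a b => 0 <= b /\ a <= b ^+ 2)); first by rewrite expr0n lexx.
move=> i a b _ [b0 ab]; split; first by rewrite addr_ge0.
by have := normr_ge0 (v i 0); rewrite -[v i 0 ^+ 2]real_normK ?num_real; nra.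
Qed.

Lemma norm2_le_norm1 k (v : 'cV[R]_k) : norm2 v <= norm1 v.
Proof.
by rewrite -ler_sqr ?nnegrE ?norm2_ge0 ?norm1_ge0 // sqr_norm2_le_sqr_norm1.
Qed.

Lemma sqr_sum_le k (a : 'I_k -> R) :
  (\sum_i a i) ^+ 2 <= k%:R * \sum_i a i ^+ 2.
Proof.
elim: k a => [|k IH] a; first by rewrite !big_ord0 expr0n mul0r.
rewrite !big_ord_recr /=.
set S := \sum_(i < k) _; set Q := \sum_(i < k) _.
have IHa : S ^+ 2 <= k%:R * Q := IH (fun i => a (widen_ord (leqnSn k) i)).
rewrite -[k.+1]addn1 natrD.
have Q0 : 0 <= Q by rewrite sumr_ge0 // => i _; rewrite sqr_ge0.
have := sqr_ge0 (S - k%:R * a ord_max).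
have [k0|k_neq0] := eqVneq (k%:R : R) 0.
  have S0 : S = 0 by apply/eqP; rewrite -sqrf_eq0 eq_le sqr_ge0 andbT -(mul0r Q) -k0.
  by rewrite S0 k0; lra.
have : 0 < (k%:R : R) by rewrite lt_neqAle eq_sym k_neq0 ler0n.
nra.
Qed.

Lemma norm1_le_norm2 k (v : 'cV[R]_k) : norm1 v <= Num.sqrt k%:R * norm2 v.
Proof.
rewrite -ler_sqr ?nnegrE ?norm1_ge0 ?mulr_ge0 ?sqrtr_ge0 //.
rewrite exprMn sqr_sqrtr // sqr_norm2.
rewrite (eq_bigr (fun i => `|v i 0| ^+ 2)) => [|i _]; last by rewrite real_normK ?num_real.
exact: sqr_sum_le.
Qed.

Lemma mulmx_rank_eq0 k m (B : 'M[R]_(k, m)) (w : 'cV[R]_m) :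
  \rank B = m -> (B *m w == 0) = (w == 0).
Proof.
move=> rB; have rf : row_free B^T by rewrite /row_free mxrank_tr rB.
by rewrite -trmx_eq0 trmx_mul mulmx_free_eq0 // trmx_eq0.
Qed.

Lemma norm1_mulmx_gt0 k m (B : 'M[R]_(k, m)) (w : 'cV[R]_m) :
  \rank B = m -> w != 0 -> 0 < norm1 (B *m w).
Proof.
move=> rB w0; rewrite lt_neqAle norm1_ge0 andbT eq_sym norm1_eq0.
by rewrite mulmx_rank_eq0.
Qed.

End Norms.

Lemma ler_sqrtM_of_sqr (R : rcfType) (k x y : R) :
  0 <= x -> 0 <= y -> x ^+ 2 <= k * y ^+ 2 -> x <= Num.sqrt k * y.
Proof.
move=> x0 y0 xy; have [k0|k_lt0] := leP 0 k.
  by rewrite -ler_sqr ?nnegrE ?mulr_ge0 ?sqrtr_ge0 // exprMn sqr_sqrtr.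
have : k * y ^+ 2 <= 0 by rewrite nmulr_rle0 // sqr_ge0.
by rewrite ltr0_sqrtr // mul0r; nra.
Qed.

Lemma ger_sqrtM_of_sqr (R : rcfType) (k x y : R) :
  0 <= x -> 0 <= y -> k * y ^+ 2 <= x ^+ 2 -> Num.sqrt k * y <= x.
Proof.
move=> x0 y0 yx; have [k0|k_lt0] := leP 0 k; last by rewrite ltr0_sqrtr // mul0r.
by rewrite -ler_sqr ?nnegrE ?mulr_ge0 ?sqrtr_ge0 // exprMn sqr_sqrtr.
Qed.

Lemma ltr_sqrtM_of_sqr (R : rcfType) (k x y : R) :
  0 <= x -> 0 < y -> x ^+ 2 / y ^+ 2 < k -> x < Num.sqrt k * y.
Proof.
move=> x0 y0; rewrite ltr_pdivrMr ?exprn_gt0 // => xk.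
have k0 : 0 <= k.
  by rewrite -(pmulr_lge0 _ (exprn_gt0 2 y0)) (le_trans (sqr_ge0 x) (ltW xk)).
by rewrite -ltr_sqr ?nnegrE ?mulr_ge0 ?sqrtr_ge0 ?(ltW y0) // exprMn sqr_sqrtr.
Qed.

Section SingularValueBounds.
Variable R : realType.

Lemma trmx_gram p m (A : 'M[R]_(p, m)) : (A^T *m A)^T = A^T *m A.
Proof. by rewrite trmx_mul trmxK. Qed.

Lemma sqr_norm2_mulmx p m (A : 'M[R]_(p, m)) (u : 'cV[R]_m) :
  norm2 (A *m u) ^+ 2 = (u^T *m (A^T *m A) *m u) 0 0.
Proof.
rewrite sqr_norm2 mulmxA -trmx_mul -mulmxA mxE.
by apply: eq_bigr => i _; rewrite expr2 [in RHS]mxE.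
Qed.

Lemma norm2_mulmx_le p m (A : 'M[R]_(p, m)) (u : 'cV[R]_m) :
  norm2 (A *m u) <= sigma_max A * norm2 u.
Proof.
have [c [c_ge0 c_sum quadE]] := quadratic_form_spectral (trmx_gram A) u.
set E := [set a | eigenvalue (A^T *m A) a]%classic.
have E_ub : has_ubound E.
  exists (\sum_i `|spectral_value (A^T *m A) i|) => a.
  move=> /(eigenvalue_spectral_valueP (trmx_gram A)) [i ->].
  by apply: le_trans (ler_norm _) _; rewrite (bigD1 i) //= ler_wpDr // sumr_ge0.
apply: ler_sqrtM_of_sqr; rewrite ?norm2_ge0 // sqr_norm2_mulmx quadE sqr_norm2.
rewrite -c_sum mulr_sumr; apply: ler_sum => i _; apply: ler_wpM2r => //.
exact: (ub_le_sup E_ub) (eigenvalue_spectral_value (trmx_gram A) i).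
Qed.

Lemma sigma_max_gt0 p m (A : 'M[R]_(p, m)) (u : 'cV[R]_m) :
  A *m u != 0 -> 0 < sigma_max A.
Proof.
move=> Au0; rewrite lt_neqAle sqrtr_ge0 andbT eq_sym; apply/eqP => smax0.
by have := lt_le_trans (norm2_gt0 Au0) (norm2_mulmx_le A u); rewrite smax0 mul0r ltxx.
Qed.

Lemma eigenvalue_gram_gt0 k m (B : 'M[R]_(k, m)) a :
  \rank B = m -> eigenvalue (B^T *m B) a -> 0 < a.
Proof.
move=> rB /eigenvalueP [v vM v0].
have vT0 : v^T != 0 by rewrite trmx_eq0.
have Bv_sqr : norm2 (B *m v^T) ^+ 2 = a * norm2 v^T ^+ 2.
  rewrite sqr_norm2_mulmx trmxK vM -scalemxAl mxE sqr_norm2 mxE.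
  by congr (_ * _); apply: eq_bigr => j _; rewrite !mxE expr2.
have := exprn_gt0 2 (norm2_gt0 (_ : B *m v^T != 0)).
rewrite mulmx_rank_eq0 // => /(_ vT0); rewrite Bv_sqr pmulr_lgt0 //.
exact: exprn_gt0 (norm2_gt0 vT0).
Qed.

Lemma norm2_mulmx_ge k m (B : 'M[R]_(k, m)) (u : 'cV[R]_m) :
  \rank B = m -> sigma_min_nz B * norm2 u <= norm2 (B *m u).
Proof.
move=> rB.
have [c [c_ge0 c_sum quadE]] := quadratic_form_spectral (trmx_gram B) u.
set E := [set a | eigenvalue (B^T *m B) a /\ 0 < a]%classic.
have E_lb : has_lbound E by exists 0 => a [_ /ltW].
apply: ger_sqrtM_of_sqr; rewrite ?norm2_ge0 // sqr_norm2_mulmx quadE sqr_norm2.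
rewrite -c_sum mulr_sumr; apply: ler_sum => i _; apply: ler_wpM2r => //.
have ev := eigenvalue_spectral_value (trmx_gram B) i.
exact: (ge_inf E_lb) (conj ev (eigenvalue_gram_gt0 rB ev)).
Qed.

End SingularValueBounds.

Section L1Attack.
Variables (R : realType) (N n : nat) (H : 'M[R]_(N, n)) (T : {set 'I_N}).
Variables (eps : R) (xe xstar : 'cV[R]_n) (e : 'cV[R]_N).

Local Notation HT := (subrows T H).
Local Notation Hc := (subrows (~: T) H).

Hypotheses (eps_gt0 : 0 < eps) (rank_Hc : \rank Hc = n).
Hypothesis xe_feasible : norm1 (Hc *m xe) <= eps.
Hypothesis xe_optimal : forall x : 'cV[R]_n,
  norm1 (Hc *m x) <= eps -> norm1 (HT *m x) <= norm1 (HT *m xe).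
Hypotheses (e_T : subrows T e = HT *m xe) (e_Tc : subrows (~: T) e = 0).

(* Rescaling [v] onto the constraint boundary [||H_{T^c} x||_1 = eps]. *)
Lemma l1_ratio_le_opt (v : 'cV[R]_n) :
  v != 0 -> norm1 (HT *m v) / norm1 (Hc *m v) <= norm1 (HT *m xe) / eps.
Proof.
move=> v0; have b_gt0 := norm1_mulmx_gt0 rank_Hc v0.
have s_ge0 : 0 <= eps / norm1 (Hc *m v) by rewrite divr_ge0 ?ltW.
have feasible : norm1 (Hc *m ((eps / norm1 (Hc *m v)) *: v)) <= eps.
  by rewrite -scalemxAr norm1Z ger0_norm // divfK ?gt_eqF.
have := xe_optimal feasible; rewrite -scalemxAr norm1Z ger0_norm // => opt.
by rewrite ler_pdivlMr // mulrAC (mulrC _ eps) -mulrAC.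
Qed.

Lemma sigma1_le_opt : sigma1 H T * eps <= norm1 (HT *m xe).
Proof.
rewrite -ler_pdivlMr // /sigma1; set S := [set _ | _]%classic.
have [->|/set0P S_ne0] := eqVneq S set0.
  by rewrite sup0 divr_ge0 ?norm1_ge0 ?ltW.
by apply: ge_sup S_ne0 _ => _ [v v0 ->]; apply: l1_ratio_le_opt.
Qed.

Lemma sigma1_gt1 (v : 'cV[R]_n) :
  norm1 (Hc *m v) < norm1 (HT *m v) -> 1 < sigma1 H T.
Proof.
move=> hv; have v0 : v != 0.
  by apply: contraTneq _ hv => ->; rewrite !mulmx0 !norm1_0 ltxx.
have ub : has_ubound [set r | exists2 v : 'cV[R]_n, v != 0 &
    r = norm1 (HT *m v) / norm1 (Hc *m v)]%classic.
  by exists (norm1 (HT *m xe) / eps) => _ [w w0 ->]; apply: l1_ratio_le_opt.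
apply: lt_le_trans (ub_le_sup ub (ex_intro2 _ _ v v0 erefl)).
by rewrite ltr_pdivlMr ?norm1_mulmx_gt0 // mul1r.
Qed.

Lemma attacked_residual_split (z : 'cV[R]_n) :
  norm1 (H *m xstar + e - H *m z) =
  norm1 (HT *m (xe - (z - xstar))) + norm1 (Hc *m (z - xstar)).
Proof.
have -> : H *m xstar + e - H *m z = e - H *m (z - xstar).
  by rewrite mulmxBr opprB [RHS]addrCA addrA.
by rewrite (norm1_split T) !subrowsB !subrowsM e_T e_Tc sub0r norm1N -mulmxBr.
Qed.

Lemma decoder_residual_le (xd : 'cV[R]_n) :
  l1_decoder H (H *m xstar + e) xd -> norm1 (H *m xstar + e - H *m xd) <= eps.
Proof.
move=> /(_ (xstar + xe)) /le_trans; apply.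
by rewrite attacked_residual_split addrAC subrr add0r subrr mulmx0 norm1_0 add0r.
Qed.

Lemma decoder_error_ge (xd : 'cV[R]_n) :
  l1_decoder H (H *m xstar + e) xd ->
  (sigma1 H T - 1) * eps <=
  (Num.sqrt #|T|%:R * sigma_max HT - sigma_min_nz Hc) * norm2 (xstar - xd).
Proof.
move=> dec; set u := xd - xstar.
have residual := decoder_residual_le dec.
rewrite attacked_residual_split -/u in residual.
have triangle : norm1 (HT *m xe) <= norm1 (HT *m (xe - u)) + norm1 (HT *m u).
  by have := norm1D (HT *m (xe - u)) (HT *m u); rewrite -mulmxDr subrK.
have upper_T : norm1 (HT *m u) <= Num.sqrt #|T|%:R * (sigma_max HT * norm2 u).
  by apply: le_trans (norm1_le_norm2 _) _; rewrite ler_wpM2l ?sqrtr_ge0 ?norm2_mulmx_le.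
have lower_Tc : sigma_min_nz Hc * norm2 u <= norm1 (Hc *m u).
  exact: le_trans (norm2_mulmx_ge u rank_Hc) (norm2_le_norm1 _).
have := sigma1_le_opt; rewrite -[xstar - xd]opprB norm2N -/u; lra.
Qed.

End L1Attack.

Theorem theorem2 (R : realType) (N n : nat) (H : 'M[R]_(N, n)) (eps : R)
  (T : {set 'I_N})
  (xe xstar xd : 'cV[R]_n) (e : 'cV[R]_N) :
  \rank H = n ->
  0 < eps ->
  (0 < #|T|)%N ->
  \rank (subrows (~: T) H) = n ->
  (#|T|%:R > sigma_min_nz (subrows (~: T) H) ^+ 2 / sigma_max (subrows T H) ^+ 2) ->
  (exists w : 'cV[R]_N, (exists v : 'cV[R]_n, w = H *m v) /\
      norm1 (subrows T w) > norm1 (subrows (~: T) w)) ->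
  norm1 (subrows (~: T) H *m xe) <= eps ->
  (forall x : 'cV[R]_n, norm1 (subrows (~: T) H *m x) <= eps ->
      norm1 (subrows T H *m x) <= norm1 (subrows T H *m xe)) ->
  subrows T e = subrows T H *m xe ->
  subrows (~: T) e = 0 ->
  l1_decoder H (H *m xstar + e) xd ->
  let bound := (sigma1 H T - 1) /
      (Num.sqrt (#|T|%:R) * sigma_max (subrows T H) - sigma_min_nz (subrows (~: T) H)) * eps in
  [/\ bound <= norm2 (xstar - xd), 0 < bound,
      norm2 (H *m xstar + e - H *m xd) <= eps &
      forall alpha : R, alpha <= bound -> attack_successful H xstar e eps alpha].
Proof.
move=> _ eps_gt0 _ rank_Hc sigma_gap [_ [[v ->] hv]] xe_feas xe_opt e_T e_Tc dec bound.
rewrite !subrowsM in hv.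
have HTv0 : subrows T H *m v != 0.
  by rewrite -norm1_eq0 gt_eqF // (le_lt_trans (norm1_ge0 _) hv).
have denom_gt0 : 0 < Num.sqrt #|T|%:R * sigma_max (subrows T H) -
                     sigma_min_nz (subrows (~: T) H).
  by rewrite subr_gt0 ltr_sqrtM_of_sqr ?sqrtr_ge0 ?(sigma_max_gt0 HTv0).
have bound_gt0 : 0 < bound.
  by rewrite mulr_gt0 // divr_gt0 // subr_gt0 (sigma1_gt1 eps_gt0 rank_Hc xe_opt hv).
have decoded xd' : l1_decoder H (H *m xstar + e) xd' ->
    bound <= norm2 (xstar - xd') /\ norm2 (H *m xstar + e - H *m xd') <= eps.
  move=> dec'; split.
    rewrite /bound mulrAC ler_pdivrMr // [X in _ <= X]mulrC.
    exact: (decoder_error_ge eps_gt0 rank_Hc xe_feas xe_opt e_T e_Tc dec').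
  exact: le_trans (norm2_le_norm1 _) (decoder_residual_le xe_feas e_T e_Tc dec').
have [err res] := decoded xd dec.
split=> // alpha alpha_le xd' /decoded [err' res'].
by split=> //; apply: le_trans alpha_le err'.
Qed.
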